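(* Let $\mathfrak{R}$ be a locally finite $\mathbb{K}$-ringoid, $\mathcal{B}=\{\mathcal{B}_i\}_{i<\alpha}$ an exhaustive admissible family of subcategories of $\mathfrak{R}$, $\Delta$ its standard modules, and $0\neq M\in\mathcal{F}_f(\Delta)$ with a filtration $0=M_0\subsetneq M_1\subsetneq\cdots\subsetneq M_a=M$ such that $M_k/M_{k-1}\in\Delta(i_k)^\oplus$ and $i_1<i_2<\cdots<i_a$. Let $k\in[1,a]$, $j\le i_k$ and $f:\overline{P}(j)\to M$ a morphism. Then $\mathrm{Im}(f)\subseteq M_k$ if $j=i_k$, and $\mathrm{Im}(f)\subseteq M_{k-1}$ if $j<i_k$.
   Context: $\mathbb{K}$ commutative ring; $\mathbb{K}$-ringoid: skeletally small category with $\mathbb{K}$-module Hom-sets and bilinear composition. Right $\mathfrak{R}$-modules: additive contravariant functors $\mathfrak{R}\to\mathrm{Ab}$; $Y(e):=\mathrm{Hom}_\mathfrak{R}(-,e)$. Local object: local endomorphism ring; $\mathrm{ind}(\mathcal{B})$: isoclasses of local objects of $\mathcal{B}$; $\mathrm{add}$: direct summands of finite direct sums. Locally finite: Hom-sets of finite $\mathbb{K}$-length and Krull–Schmidt. Trace $\mathrm{Tr}_\mathcal{X}(M)$: sum of images of all morphisms $X\to M$, $X\in\mathcal{X}$. Exhaustive admissible family: $\{\mathcal{B}_i\}_{i<\alpha}$ full subcategories with $\mathrm{add}(\mathcal{B}_i)=\mathcal{B}_i$, increasing, union $\mathfrak{R}$, nonempty sections $\sigma_i(\mathcal{B}):=\mathrm{ind}(\mathcal{B}_i)\setminus\bigcup_{j<i}\mathrm{ind}(\mathcal{B}_j)$.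 $\overline{P}(j):=\bigoplus_{r\in\sigma_j(\mathcal{B})}Y(r)$; $\Delta_e(i):=Y(e)/\mathrm{Tr}_{\bigoplus_{j<i}\overline{P}(j)}(Y(e))$ for $e\in\sigma_i(\mathcal{B})$; $\Delta(i):=\{\Delta_e(i)\}_{e\in\sigma_i(\mathcal{B})}$, $\Delta:=\bigcup_i\Delta(i)$. $\mathcal{X}^\oplus$: finite direct sums of members of $\mathcal{X}$; $\mathcal{F}_f(\mathcal{X})$: modules with a finite chain of submodules whose successive quotients lie in $\mathcal{X}^\oplus$. *)

From mathcomp Require Import all_boot all_algebra.
From Stdlib Require Import List.

Set Implicit Arguments.
Unset Strict Implicit.
Unset Printing Implicit Defensive.
Import GRing.Theory.
Local Open Scope ring_scope.

Record ringoid (K : comPzRingType) := Ringoid {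
  Obj : Type;
  Hom : Obj -> Obj -> lmodType K;
  comp : forall x y z : Obj, Hom y z -> Hom x y -> Hom x z;
  idm : forall x : Obj, Hom x x;
  comp_assoc : forall x y z w (h : Hom z w) (g : Hom y z) (f : Hom x y),
      comp h (comp g f) = comp (comp h g) f;
  comp_idl : forall x y (f : Hom x y), comp (idm y) f = f;
  comp_idr : forall x y (f : Hom x y), comp f (idm x) = f;
  comp_linl : forall x y z (f : Hom x y) (a : K) (g g' : Hom y z),
      comp (a *: g + g') f = a *: comp g f + comp g' f;
  comp_linr : forall x y z (g : Hom y z) (a : K) (f f' : Hom x y),
      comp g (a *: f + f') = a *: comp g f + comp g f'
}.

Arguments comp {K R x y z} : rename.
Arguments idm {K R} x : rename.

Section Ringoid.
Variables (K : comPzRingType) (R : ringoid K).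
Local Notation Obj := (Obj R).
Local Notation Hom := (@Hom K R).

Definition iso_obj (x y : Obj) : Prop :=
  exists (f : Hom x y) (g : Hom y x), comp g f = idm x /\ comp f g = idm y.

Definition is_unit_end (x : Obj) (f : Hom x x) : Prop :=
  exists g : Hom x x, comp g f = idm x /\ comp f g = idm x.

Definition local_obj (x : Obj) : Prop :=
  idm x <> 0 /\
  forall f g : Hom x x, ~ is_unit_end f -> ~ is_unit_end g -> ~ is_unit_end (f + g).

Definition is_dsum_obj (x : Obj) (n : nat) (ys : 'I_n -> Obj) : Prop :=
  exists (iota : forall t, Hom (ys t) x) (pi : forall t, Hom x (ys t)),
    (forall t, comp (pi t) (iota t) = idm (ys t)) /\
    (forall s t (st : s <> t), comp (pi s) (iota t) = 0) /\
    \sum_(t < n) comp (iota t) (pi t) = idm x.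

Definition dsummand (z x : Obj) : Prop :=
  exists w : Obj, exists (i1 : Hom z x) (i2 : Hom w x) (p1 : Hom x z) (p2 : Hom x w),
    comp p1 i1 = idm z /\ comp p2 i2 = idm w /\
    comp p1 i2 = 0 /\ comp p2 i1 = 0 /\
    comp i1 p1 + comp i2 p2 = idm x.

Definition addB (B : Obj -> Prop) (z : Obj) : Prop :=
  exists (n : nat) (ys : 'I_n -> Obj) (x : Obj),
    (forall t, B (ys t)) /\ is_dsum_obj x ys /\ dsummand z x.

(* finite K-length of a K-module : existence of a composition series *)
Definition is_Ksub (V : lmodType K) (S : V -> Prop) : Prop :=
  S 0 /\ (forall u v, S u -> S v -> S (u + v)) /\ (forall (a : K) v, S v -> S (a *: v)).

Definition finite_length (V : lmodType K) : Prop :=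
  exists (n : nat) (c : nat -> V -> Prop),
    (forall t, is_Ksub (c t)) /\
    (forall v, c 0%N v <-> v = 0) /\ (forall v, c n v) /\
    forall t, (t < n)%N ->
      ((forall v, c t v -> c t.+1 v) /\ ~ (forall v, c t.+1 v -> c t v)) /\
      forall S, is_Ksub S -> (forall v, c t v -> S v) -> (forall v, S v -> c t.+1 v) ->
        (forall v, S v -> c t v) \/ (forall v, c t.+1 v -> S v).

Definition krull_schmidt : Prop :=
  forall x : Obj, exists (n : nat) (ys : 'I_n -> Obj),
    (forall t, local_obj (ys t)) /\ is_dsum_obj x ys.

Definition locally_finite : Prop :=
  (forall x y : Obj, finite_length (Hom x y)) /\ krull_schmidt.

(* Right R-modules (additive contravariant functors R -> Ab), encoded  *)
(* setoid-style: at each object a carrier type, a membership predicate *)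
(* [el] singling out the elements, an equality [meq], group operations *)
(* and the action  act m f = M(f)(m)  for f : x -> y, m in M(y).       *)
Record rmod := RMod {
  car : Obj -> Type;
  el : forall x, car x -> Prop;
  meq : forall x, car x -> car x -> Prop;
  mzero : forall x, car x;
  madd : forall x, car x -> car x -> car x;
  mopp : forall x, car x -> car x;
  act : forall x y, car y -> Hom x y -> car x
}.

Arguments el {M x} : rename.
Arguments meq {M x} : rename.
Arguments mzero M x : rename.
Arguments madd {M x} : rename.
Arguments mopp {M x} : rename.
Arguments act {M x y} : rename.

Definition is_rmod (M : rmod) : Prop :=
  (forall x, el (mzero M x)) /\
  (forall x (a b : car M x), el a -> el b -> el (madd a b)) /\
  (forall x (a : car M x), el a -> el (mopp a)) /\
  (forall x y (m : car M y) (f : Hom x y), el m -> el (act m f)) /\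
  (forall x (a : car M x), el a -> meq a a) /\
  (forall x (a b : car M x), el a -> el b -> meq a b -> meq b a) /\
  (forall x (a b c : car M x), el a -> el b -> el c -> meq a b -> meq b c -> meq a c) /\
  (forall x (a a' b b' : car M x), el a -> el a' -> el b -> el b' ->
      meq a a' -> meq b b' -> meq (madd a b) (madd a' b')) /\
  (forall x (a a' : car M x), el a -> el a' -> meq a a' -> meq (mopp a) (mopp a')) /\
  (forall x y (m m' : car M y) (f : Hom x y), el m -> el m' -> meq m m' ->
      meq (act m f) (act m' f)) /\
  (forall x (a b c : car M x), el a -> el b -> el c ->
      meq (madd a (madd b c)) (madd (madd a b) c)) /\
  (forall x (a b : car M x), el a -> el b -> meq (madd a b) (madd b a)) /\
  (forall x (a : car M x), el a -> meq (madd (mzero M x) a) a) /\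
  (forall x (a : car M x), el a -> meq (madd (mopp a) a) (mzero M x)) /\
  (forall x y (m m' : car M y) (f : Hom x y), el m -> el m' ->
      meq (act (madd m m') f) (madd (act m f) (act m' f))) /\
  (forall x y (m : car M y) (f g : Hom x y), el m ->
      meq (act m (f + g)) (madd (act m f) (act m g))) /\
  (forall x (m : car M x), el m -> meq (act m (idm x)) m) /\
  (forall x y z (m : car M z) (g : Hom y z) (f : Hom x y), el m ->
      meq (act m (comp g f)) (act (act m g) f)).

Definition submod (M : rmod) := forall x, car M x -> Prop.

Definition is_submod (M : rmod) (N : submod M) : Prop :=
  (forall x (a : car M x), N x a -> el a) /\
  (forall x (a b : car M x), el a -> el b -> meq a b -> N x a -> N x b) /\
  (forall x, N x (mzero M x)) /\
  (forall x (a b : car M x), N x a -> N x b -> N x (madd a b)) /\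
  (forall x (a : car M x), N x a -> N x (mopp a)) /\
  (forall x y (m : car M y) (f : Hom x y), N y m -> N x (act m f)).

Definition is_morph (M N : rmod) (phi : forall x, car M x -> car N x) : Prop :=
  (forall x (a : car M x), el a -> el (phi x a)) /\
  (forall x (a b : car M x), el a -> el b -> meq a b -> meq (phi x a) (phi x b)) /\
  (forall x (a b : car M x), el a -> el b ->
      meq (phi x (madd a b)) (madd (phi x a) (phi x b))) /\
  (forall x y (m : car M y) (f : Hom x y), el m ->
      meq (phi x (act m f)) (act (phi y m) f)).

Definition iso_mod (M N : rmod) : Prop :=
  exists (phi : forall x, car M x -> car N x) (psi : forall x, car N x -> car M x),
    is_morph phi /\ is_morph psi /\
    (forall x (a : car M x), el a -> meq (psi x (phi x a)) a) /\
    (forall x (b : car N x), el b -> meq (phi x (psi x b)) b).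

Definition im_sub (M N : rmod) (phi : forall x, car M x -> car N x) (S : submod N) : Prop :=
  forall x (a : car M x), el a -> S x (phi x a).

Definition subquot (M : rmod) (S N : submod M) : rmod :=
  {| car := car M; el := S; meq := fun x a b => N x (madd a (mopp b));
     mzero := mzero M; madd := @madd M; mopp := @mopp M; act := @act M |}.

Definition fullsub (M : rmod) : submod M := fun x a => el a.

Definition zerosub (M : rmod) : submod M := fun x a => el a /\ meq a (mzero M x).

Definition trace (X M : rmod) : submod M := fun x m =>
  el m /\
  exists l : list ((forall y, car X y -> car M y) * car X x),
    Forall (fun p => is_morph p.1 /\ el p.2) l /\
    meq m (fold_right (fun p acc => madd (p.1 x p.2) acc) (mzero M x) l).

Definition dsum (J : Type) (D : J -> rmod) : rmod :=
  {| car := fun x => forall j, car (D j) x;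
     el := fun x c => (forall j, el (c j)) /\
                      exists l : list J, forall j, ~ In j l -> meq (c j) (mzero (D j) x);
     meq := fun x c d => forall j, meq (c j) (d j);
     mzero := fun x j => mzero (D j) x;
     madd := fun x c d j => madd (c j) (d j);
     mopp := fun x c j => mopp (c j);
     act := fun x y c f j => act (c j) f |}.

Definition Yo (e : Obj) : rmod :=
  {| car := fun x => Hom x e;
     el := fun x _ => True;
     meq := fun x a b => a = b;
     mzero := fun x => 0;
     madd := fun x a b => a + b;
     mopp := fun x a => - a;
     act := fun x y h f => comp h f |}.

(* Admissible families, indexed by a well-ordered type (I, lt)         *)
(* (i.e. by an ordinal alpha).                                         *)
Definition well_order (I : Type) (lt : I -> I -> Prop) : Prop :=
  well_founded lt /\
  (forall i j k, lt i j -> lt j k -> lt i k) /\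
  (forall i j, lt i j \/ i = j \/ lt j i).

Definition section (I : Type) (lt : I -> I -> Prop) (B : I -> Obj -> Prop)
    (i : I) (x : Obj) : Prop :=
  local_obj x /\ B i x /\
  forall j y, lt j i -> B j y -> local_obj y -> ~ iso_obj x y.

Definition exhaustive_admissible (I : Type) (lt : I -> I -> Prop)
    (B : I -> Obj -> Prop) : Prop :=
  (forall i x, B i x <-> addB (B i) x) /\
  (forall i j x, lt i j -> B i x -> B j x) /\
  (forall x, exists i, B i x) /\
  (forall i, exists x, section lt B i x).

Definition rep_system (rep : Obj -> Prop) : Prop :=
  (forall r, rep r -> local_obj r) /\
  (forall x, local_obj x -> exists r, rep r /\ iso_obj r x) /\
  (forall r r', rep r -> rep r' -> iso_obj r r' -> r = r').

Definition Pbar (I : Type) (lt : I -> I -> Prop) (B : I -> Obj -> Prop)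
    (rep : Obj -> Prop) (j : I) : rmod :=
  @dsum {r : Obj | rep r /\ section lt B j r} (fun r => Yo (proj1_sig r)).

Definition Pbar_below (I : Type) (lt : I -> I -> Prop) (B : I -> Obj -> Prop)
    (rep : Obj -> Prop) (i : I) : rmod :=
  @dsum {j : I | lt j i} (fun j => Pbar lt B rep (proj1_sig j)).

Definition Delta (I : Type) (lt : I -> I -> Prop) (B : I -> Obj -> Prop)
    (rep : Obj -> Prop) (e : Obj) (i : I) : rmod :=
  @subquot (Yo e) (@fullsub (Yo e)) (@trace (Pbar_below lt B rep i) (Yo e)).

Definition in_Delta_sum (I : Type) (lt : I -> I -> Prop) (B : I -> Obj -> Prop)
    (rep : Obj -> Prop) (i : I) (N : rmod) : Prop :=
  exists (n : nat) (es : 'I_n -> Obj),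
    (forall t, rep (es t) /\ section lt B i (es t)) /\
    iso_mod N (@dsum 'I_n (fun t => Delta lt B rep (es t) i)).

End Ringoid.

(* For j < i every morphism P̄(j) -> Δ_e(i) vanishes: P̄(j) is a direct sum of
   representables Y(r) with r ∈ σ_j(B), and by Yoneda the image of the generator
   of Y(r) is a morphism w : r -> e, which factors through the summand P̄(j) of
   ⊕_{j'<i} P̄(j') and so lies in the trace defining Δ_e(i).  Hence if
   f : P̄(j) -> M has image in M_l with j < i_l, its composite with
   M_l -> M_l/M_{l-1} ≅ ⊕ Δ(i_l) is zero and Im f ⊆ M_{l-1}.  Descending from
   M_a = M through the layers l > k (where j ≤ i_k < i_l) gives Im f ⊆ M_k, and one
   more step gives Im f ⊆ M_{k-1} when j < i_k. *)

From Pilot Require Import Defs.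
From mathcomp Require Import all_boot all_algebra.
From Stdlib Require Import List ClassicalEpsilon ProofIrrelevance Eqdep.
From mathcomp Require Import zify.
Import GRing.Theory.

Set Implicit Arguments.
Unset Strict Implicit.
Unset Printing Implicit Defensive.

Local Open Scope ring_scope.

Section RingoidComposition.
Variables (K : comPzRingType) (R : ringoid K).
Implicit Types x y z : Obj R.

Lemma comp_addl x y z (g g' : Defs.Hom y z) (f : Defs.Hom x y) :
  Defs.comp (g + g') f = Defs.comp g f + Defs.comp g' f.
Proof. by rewrite -{1}[g]scale1r comp_linl scale1r. Qed.

Lemma comp_addr x y z (g : Defs.Hom y z) (f f' : Defs.Hom x y) :
  Defs.comp g (f + f') = Defs.comp g f + Defs.comp g f'.
Proof. by rewrite -{1}[f]scale1r comp_linr scale1r. Qed.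

Lemma comp0l x y z (f : Defs.Hom x y) : Defs.comp (0 : Defs.Hom y z) f = 0.
Proof. by apply: (@addrI _ (Defs.comp 0 f)); rewrite -comp_addl !addr0. Qed.

Lemma comp0r x y z (g : Defs.Hom y z) : Defs.comp g (0 : Defs.Hom x y) = 0.
Proof. by apply: (@addrI _ (Defs.comp g 0)); rewrite -comp_addr !addr0. Qed.

End RingoidComposition.

Section SetoidModule.
Variables (K : comPzRingType) (R : ringoid K) (M : rmod R) (HM : is_rmod M).
Variable x : Obj R.
Implicit Types a b c n : car M x.

Lemma el_mzero : el (mzero M x).
Proof. by case: HM. Qed.

Lemma el_madd a b : el a -> el b -> el (madd a b).
Proof. by case: HM => _ [H _]; apply: H. Qed.

Lemma el_mopp a : el a -> el (mopp a).
Proof. by case: HM => _ [_ [H _]]; apply: H. Qed.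

Lemma el_act y (f : Defs.Hom x y) (m : car M y) : el m -> el (act m f).
Proof. by case: HM => _ [_ [_ [H _]]]; apply: H. Qed.

Lemma meq_refl a : el a -> meq a a.
Proof. by case: HM => _ [_ [_ [_ [H _]]]]; apply: H. Qed.

Lemma meq_sym a b : el a -> el b -> meq a b -> meq b a.
Proof. by case: HM => _ [_ [_ [_ [_ [H _]]]]]; apply: H. Qed.

Lemma meq_trans a b c : el a -> el b -> el c -> meq a b -> meq b c -> meq a c.
Proof. by case: HM => _ [_ [_ [_ [_ [_ [H _]]]]]]; apply: H. Qed.

Lemma meq_madd a a' b b' : el a -> el a' -> el b -> el b' ->
  meq a a' -> meq b b' -> meq (madd a b) (madd a' b').
Proof. by case: HM => _ [_ [_ [_ [_ [_ [_ [H _]]]]]]]; apply: H. Qed.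

Lemma maddA a b c : el a -> el b -> el c ->
  meq (madd a (madd b c)) (madd (madd a b) c).
Proof. by case: HM => _ [_ [_ [_ [_ [_ [_ [_ [_ [_ [H _]]]]]]]]]]; apply: H. Qed.

Lemma maddC a b : el a -> el b -> meq (madd a b) (madd b a).
Proof. by case: HM => _ [_ [_ [_ [_ [_ [_ [_ [_ [_ [_ [H _]]]]]]]]]]]; apply: H. Qed.

Lemma madd0m a : el a -> meq (madd (mzero M x) a) a.
Proof. by case: HM => _ [_ [_ [_ [_ [_ [_ [_ [_ [_ [_ [_ [H _]]]]]]]]]]]]; apply: H. Qed.

Lemma maddNm a : el a -> meq (madd (mopp a) a) (mzero M x).
Proof. by case: HM => _ [_ [_ [_ [_ [_ [_ [_ [_ [_ [_ [_ [_ [H _]]]]]]]]]]]]]; apply: H. Qed.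

Local Hint Resolve el_mzero el_madd el_mopp meq_refl : core.

Local Ltac via b := apply: (@meq_trans _ b); auto.

Lemma maddm0 a : el a -> meq (madd a (mzero M x)) a.
Proof. by move=> ha; via (madd (mzero M x) a); [apply: maddC | apply: madd0m]; auto. Qed.

Lemma maddmN a : el a -> meq (madd a (mopp a)) (mzero M x).
Proof. by move=> ha; via (madd (mopp a) a); [apply: maddC | apply: maddNm]; auto. Qed.

Variables (N : submod M) (HN : is_submod N).
Arguments N : clear implicits.

Lemma submod_el a : N x a -> el a.
Proof. by case: HN => H _; apply: H. Qed.

Lemma submod_meq a b : el a -> el b -> meq a b -> N x a -> N x b.
Proof. by case: HN => _ [H _]; apply: H. Qed.

Lemma submod0 : N x (mzero M x).
Proof. by case: HN => _ [_ [H _]]. Qed.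

Lemma submodD a b : N x a -> N x b -> N x (madd a b).
Proof. by case: HN => _ [_ [_ [H _]]]; apply: H. Qed.

Lemma submodN a : N x a -> N x (mopp a).
Proof. by case: HN => _ [_ [_ [_ [H _]]]]; apply: H. Qed.

Lemma submod_act y (f : Defs.Hom x y) (m : car M y) : N y m -> N x (act m f).
Proof. by case: HN => _ [_ [_ [_ [_ H]]]]; apply: H. Qed.

(* Congruence modulo [N], phrased without [mopp] so that its symmetry and
   transitivity need no identities for opposites. *)
Definition eqmod a b := [/\ el a, el b & exists2 n, N x n & meq a (madd b n)].

Local Hint Resolve submod0 : core.
Local Hint Immediate submod_el : core.

Lemma eqmod_of_meq a b : el a -> el b -> meq a b -> eqmod a b.
Proof.
move=> ha hb hab; split=> //; exists (mzero M x) => //.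
by via b; apply: meq_sym; auto; apply: maddm0; auto.
Qed.

Lemma eqmod_sym a b : eqmod a b -> eqmod b a.
Proof.
case=> ha hb [n hn e]; have hn' := submod_el hn.
split=> //; exists (mopp n); first exact: submodN.
apply: meq_sym; auto.
via (madd (madd b n) (mopp n)); first by apply: meq_madd; auto.
via (madd b (madd n (mopp n))); first by apply: meq_sym; auto; apply: maddA; auto.
via (madd b (mzero M x)); last apply: maddm0; auto.
by apply: meq_madd; auto; apply: maddmN; auto.
Qed.

Lemma eqmod_trans a b c : eqmod a b -> eqmod b c -> eqmod a c.
Proof.
case=> ha hb [n hn e] [_ hc [m hm e']].
have hn' := submod_el hn; have hm' := submod_el hm.
split=> //; exists (madd m n); first exact: submodD.
via (madd b n); via (madd (madd c m) n); first by apply: meq_madd; auto.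
by apply: meq_sym; auto; apply: maddA; auto.
Qed.

Lemma eqmodD a a' b b' : eqmod a a' -> eqmod b b' -> eqmod (madd a b) (madd a' b').
Proof.
case=> ha ha' [n hn e] [hb hb' [m hm e']].
have hn' := submod_el hn; have hm' := submod_el hm.
split; auto; exists (madd n m); first exact: submodD.
via (madd (madd a' n) (madd b' m)); first by apply: meq_madd; auto.
via (madd a' (madd n (madd b' m))); first by apply: meq_sym; auto; apply: maddA; auto.
via (madd a' (madd (madd n b') m)); first by apply: meq_madd; auto; apply: maddA; auto.
via (madd a' (madd (madd b' n) m)).
  by apply: meq_madd; auto; apply: meq_madd; auto; apply: maddC; auto.
via (madd a' (madd b' (madd n m))).
  by apply: meq_madd; auto; apply: meq_sym; auto; apply: maddA; auto.
apply: maddA; auto.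
Qed.

Lemma eqmod_of_sub a b : el a -> el b -> N x (madd a (mopp b)) -> eqmod a b.
Proof.
move=> ha hb h; split=> //; exists (madd a (mopp b)) => //.
apply: meq_sym; auto.
via (madd b (madd (mopp b) a)); first by apply: meq_madd; auto; apply: maddC; auto.
via (madd (madd b (mopp b)) a); first apply: maddA; auto.
via (madd (mzero M x) a); last apply: madd0m; auto.
by apply: meq_madd; auto; apply: maddmN; auto.
Qed.

Lemma submod_of_eqmod0 a : eqmod a (mzero M x) -> N x a.
Proof.
case=> ha _ [n hn e]; apply: (submod_meq (a := n)); auto.
by apply: meq_sym; auto; via (madd (mzero M x) n); apply: madd0m; auto.
Qed.

Lemma eqmod0_of_submod a : N x a -> eqmod a (mzero M x).
Proof.
move=> ha; have ha' := submod_el ha; split=> //; exists a => //.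
by apply: meq_sym; auto; apply: madd0m.
Qed.

Lemma sub_of_eqmod a b : eqmod a b -> N x (madd a (mopp b)).
Proof.
move=> hab; have [ha hb _] := hab.
apply: submod_of_eqmod0; apply: (eqmod_trans (b := madd b (mopp b))).
  by apply: eqmodD => //; apply: eqmod_of_meq; auto.
by apply: eqmod_of_meq; auto; apply: maddmN; auto.
Qed.

Lemma submod_sub_of_meq a b : el a -> el b -> meq a b -> N x (madd a (mopp b)).
Proof. by move=> ha hb hab; apply: sub_of_eqmod; exact: eqmod_of_meq. Qed.

Lemma submod_of_eqmod_double a : el a -> eqmod (madd a a) a -> N x a.
Proof.
move=> ha h; apply: submod_of_eqmod0.
have h2 := eqmodD h (eqmod_of_meq (el_mopp ha) (el_mopp ha) (meq_refl (el_mopp ha))).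
apply: (eqmod_trans (b := madd (madd a a) (mopp a))).
  apply: eqmod_of_meq; auto.
  via (madd a (madd a (mopp a))); last apply: maddA; auto.
  via (madd a (mzero M x)); first by apply: meq_sym; auto; apply: maddm0; auto.
  by apply: meq_madd; auto; apply: meq_sym; auto; apply: maddmN; auto.
by apply: (eqmod_trans h2); apply: eqmod_of_meq; auto; apply: maddmN; auto.
Qed.

End SetoidModule.

Section MorphismLaws.
Variables (K : comPzRingType) (R : ringoid K) (M N : rmod R).
Variables (phi : forall x, car M x -> car N x) (Hphi : is_morph phi).
Arguments phi : clear implicits.
Variable x : Obj R.
Implicit Types a b : car M x.

Lemma morph_el a : el a -> el (phi x a).
Proof. by case: Hphi => H _; apply: H. Qed.

Lemma morph_meq a b : el a -> el b -> meq a b -> meq (phi x a) (phi x b).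
Proof. by case: Hphi => _ [H _]; apply: H. Qed.

Lemma morph_madd a b : el a -> el b -> meq (phi x (madd a b)) (madd (phi x a) (phi x b)).
Proof. by case: Hphi => _ [_ [H _]]; apply: H. Qed.

Lemma morph_act y (m : car M y) (f : Defs.Hom x y) :
  el m -> meq (phi x (act m f)) (act (phi y m) f).
Proof. by case: Hphi => _ [_ [_ H]]; apply: H. Qed.

End MorphismLaws.

Section TraceInRepresentable.
Variables (K : comPzRingType) (R : ringoid K) (X : rmod R) (e x : Obj R).
Local Notation Tr := (@trace K R X (Yo e) x).

Lemma trace0 : Tr 0.
Proof. by split=> //; exists nil. Qed.

Lemma traceD a b : Tr a -> Tr b -> Tr (a + b).
Proof.
move=> [_ [la [Fa ->]]] [_ [lb [Fb ->]]]; split=> //; exists (la ++ lb).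
split; first exact/Forall_app.
by rewrite /= fold_right_app; elim: la {Fa} => [|p l IH] /=; rewrite ?add0r // -IH addrA.
Qed.

Lemma trace_of_sub a b : Tr (a - b) -> Tr b -> Tr a.
Proof. by move=> hab hb; rewrite -(subrK b a); exact: traceD. Qed.

Lemma trace_sub_trans a b c : Tr (a - b) -> Tr (b - c) -> Tr (a - c).
Proof.
move=> hab hbc; have -> : a - c = (a - b) + (b - c) by rewrite addrA subrK.
exact: traceD.
Qed.

End TraceInRepresentable.

Section FactorThroughLowerSection.
Variables (K : comPzRingType) (R : ringoid K).

Definition kdelta (r o : Obj R) : Defs.Hom r o :=
  match excluded_middle_informative (r = o) with
  | left ro => eq_rect r (fun o => Defs.Hom r o) (idm r) o ro
  | right _ => 0
  end.

Lemma kdelta_id r : kdelta r r = idm r.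
Proof.
by rewrite /kdelta; case: excluded_middle_informative => // rr; rewrite -eq_rect_eq.
Qed.

Lemma kdelta_ne r o : r <> o -> kdelta r o = 0.
Proof. by rewrite /kdelta; case: excluded_middle_informative. Qed.

Lemma finite_support_of_val (y o : Obj R) (P : Obj R -> Prop)
    (F : forall r : {o | P o}, Defs.Hom y (proj1_sig r)) :
  (forall r, proj1_sig r <> o -> F r = 0) ->
  exists l, forall r, ~ List.In r l -> F r = 0.
Proof.
move=> HF; case: (classic (exists r : {o | P o}, proj1_sig r = o)) => [[r1 r1o]|no_r].
  exists (r1 :: nil) => r nin; apply: HF => ro; apply: nin; left.
  by case: r1 r ro r1o => [r1 p1] [r p] /= ro r1o; apply: subset_eq_compat; rewrite ro.
by exists nil => r _; apply: HF => ro; apply: no_r; exists r.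
Qed.

Variables (I : Type) (lt : I -> I -> Prop) (B : I -> Obj R -> Prop) (rep : Obj R -> Prop).
Variables (i j : I) (Hji : lt j i) (r : Obj R) (Hr : rep r /\ section lt B j r).
Variables (e x : Obj R) (w : Defs.Hom r e) (u : Defs.Hom x r).

(* [u] placed in the summand [Y(r)] of [P̄(j)] inside [⊕_{j'<i} P̄(j')]; evaluating
   at that summand and composing with [w] exhibits [w ∘ u] as an element of the trace. *)
Definition Pbar_below_point : car (Pbar_below lt B rep i) x :=
  fun j0 r0 => if excluded_middle_informative (proj1_sig j0 = j)
               then Defs.comp (kdelta r (proj1_sig r0)) u else 0.

Definition Pbar_below_eval y (d : car (Pbar_below lt B rep i) y) : car (Yo e) y :=
  Defs.comp w (d (exist _ j Hji) (exist _ r Hr)).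

Lemma Pbar_below_eval_morph : is_morph Pbar_below_eval.
Proof.
split=> //; split; first by move=> y a b _ _ ab; rewrite /Pbar_below_eval /= ab.
split; first by move=> y a b _ _; rewrite /Pbar_below_eval /= comp_addr.
by move=> y z m f _; rewrite /Pbar_below_eval /= comp_assoc.
Qed.

Lemma Pbar_below_point_el : el Pbar_below_point.
Proof.
split.
  move=> j0; split=> //; apply: (finite_support_of_val (o := r)) => r0 r0r.
  rewrite /Pbar_below_point; case: excluded_middle_informative => // j0j.
  by rewrite kdelta_ne ?comp0l // => rr0; apply: r0r.
exists (exist _ j Hji :: nil) => j0 nin r0 /=; rewrite /Pbar_below_point.
case: excluded_middle_informative => // j0j; case: nin; left.
by case: j0 j0j {r0} => [j0 p] /= j0j; apply: subset_eq_compat.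
Qed.

Lemma trace_comp_lower_section : @trace K R (Pbar_below lt B rep i) (Yo e) x (Defs.comp w u).
Proof.
split=> //; exists ((Pbar_below_eval, Pbar_below_point) :: nil); split.
  by constructor=> //; split; [exact: Pbar_below_eval_morph | exact: Pbar_below_point_el].
rewrite /= /Pbar_below_eval /Pbar_below_point addr0 /=.
by case: excluded_middle_informative => //= _; rewrite kdelta_id comp_idl.
Qed.

End FactorThroughLowerSection.

Section PbarElements.
Variables (K : comPzRingType) (R : ringoid K).
Variables (I : Type) (lt : I -> I -> Prop) (B : I -> Obj R -> Prop) (rep : Obj R -> Prop).
Variable j : I.

Local Notation Pj := (Pbar lt B rep j).
Local Notation Sj := {r | rep r /\ section lt B j r}.

Lemma Pbar_el_of_support y (c : car Pj y) (L : list Sj) :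
  (forall r, ~ List.In r L -> c r = 0) -> el c.
Proof. by move=> HL; split=> //; exists L. Qed.

Lemma Pbar_el_madd y (a b : car Pj y) : el a -> el b -> el (madd a b).
Proof.
case=> _ [la Ha] [_ [lb Hb]]; apply: (Pbar_el_of_support (L := la ++ lb)) => r nin /=.
by rewrite Ha ?Hb ?addr0 // => inl; apply: nin; apply: in_or_app; [right | left].
Qed.

Definition Pbar_gen (r : Sj) : car Pj (proj1_sig r) :=
  fun r0 => kdelta (proj1_sig r) (proj1_sig r0).

Definition Pbar_drop y (r : Sj) (c : car Pj y) : car Pj y :=
  fun r0 => if excluded_middle_informative (r0 = r) then 0 else c r0.

Lemma kdelta_Sj (r r0 : Sj) : r0 <> r -> kdelta (proj1_sig r) (proj1_sig r0) = 0.
Proof.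
move=> r0r; apply: kdelta_ne => rr0; apply: r0r.
by case: r r0 rr0 => [r p] [r0 p0] /= rr0; apply: subset_eq_compat.
Qed.

Lemma Pbar_gen_el (r : Sj) : el (Pbar_gen r).
Proof.
apply: (Pbar_el_of_support (L := r :: nil)) => r0 nin.
by apply: kdelta_Sj => r0r; apply: nin; left.
Qed.

Lemma Pbar_decomp y (c : car Pj y) (r : Sj) :
  meq c (madd (act (Pbar_gen r) (c r)) (Pbar_drop r c)).
Proof.
move=> r0 /=; rewrite /Pbar_gen /Pbar_drop.
case: excluded_middle_informative => [r0r|r0r]; first by subst r0; rewrite kdelta_id comp_idl addr0.
by rewrite kdelta_Sj // comp0l add0r.
Qed.

Lemma Pbar_el_act x y (f : Defs.Hom x y) (c : car Pj y) : el c -> el (act c f).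
Proof.
by case=> _ [L HL]; apply: (Pbar_el_of_support (L := L)) => r nin /=; rewrite HL ?comp0l.
Qed.

End PbarElements.

Section NoMorphismToHigherDelta.
Variables (K : comPzRingType) (R : ringoid K).
Variables (I : Type) (lt : I -> I -> Prop) (B : I -> Obj R -> Prop) (rep : Obj R -> Prop).
Variables (i j : I) (Hji : lt j i) (e : Obj R).
Variable g : forall y, car (Pbar lt B rep j) y -> car (Delta lt B rep e i) y.
Hypothesis Hg : is_morph g.
Arguments g : clear implicits.

Local Notation Pj := (Pbar lt B rep j).
Local Notation Tr := (@trace K R (Pbar_below lt B rep i) (Yo e) _).
Local Notation Sj := {r | rep r /\ section lt B j r}.

Lemma trace_morph_of_zero y (c : car Pj y) : (forall r, c r = 0) -> Tr (g y c).
Proof.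
(* [c] equals [c ∘ 0], which [g] sends to [g c ∘ 0 = 0]. *)
move=> c0; have elc : el c by apply: (Pbar_el_of_support (L := nil)).
have elc0 : el (act c (0 : Defs.Hom y y)).
  by apply: (Pbar_el_of_support (L := nil)) => r _ /=; rewrite comp0r.
have c_act0 : meq c (act c (0 : Defs.Hom y y)) by move=> r /=; rewrite c0 comp0r.
apply: (trace_of_sub (morph_meq Hg elc elc0 c_act0)).
by have := morph_act Hg (0 : Defs.Hom y y) elc; rewrite /= comp0r subr0.
Qed.

Lemma trace_morph_gen_act y (r : Sj) (u : Defs.Hom y (proj1_sig r)) :
  Tr (g y (act (Pbar_gen r) u)).
Proof.
apply: (trace_of_sub (morph_act Hg u (Pbar_gen_el r))).
exact: (trace_comp_lower_section Hji (proj2_sig r)).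
Qed.

Lemma morph_Pbar_Delta_trace y (c : car Pj y) : el c -> Tr (g y c).
Proof.
case=> _ [L]; elim: L c => [|r L IH] c HL; first by apply: trace_morph_of_zero => r; apply: HL.
set A := act (Pbar_gen r) (c r); set c' := Pbar_drop r c.
have elA : el A.
  apply: (Pbar_el_of_support (L := r :: nil)) => r0 nin /=.
  by rewrite /A /= /Pbar_gen kdelta_Sj ?comp0l // => r0r; apply: nin; left.
have c'L : forall r0, ~ List.In r0 L -> c' r0 = 0.
  rewrite /c' /Pbar_drop => r0 nin; case: excluded_middle_informative => // r0r.
  by apply: HL => -[rr0|] //; apply: r0r.
have elc' := Pbar_el_of_support c'L.
have elc : el c := Pbar_el_of_support HL.
have elAc' : el (madd A c').
  apply: (Pbar_el_of_support (L := r :: L)) => r0 nin /=.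
  have dec := Pbar_decomp c r r0; rewrite /= in dec; rewrite /A /c' /= -dec.
  exact: HL.
apply: (trace_of_sub (morph_meq Hg elc elAc' (Pbar_decomp c r))).
apply: (trace_of_sub (morph_madd Hg elA elc')).
by apply: traceD; [exact: trace_morph_gen_act | exact: IH].
Qed.

End NoMorphismToHigherDelta.

Section MorphismIntoSubquotient.
Variables (K : comPzRingType) (R : ringoid K) (M : rmod R) (HM : is_rmod M).
Variables (N1 N0 : submod M) (HN1 : is_submod N1) (HN0 : is_submod N0).
Variables (D : rmod R) (psi : forall x, car D x -> car (subquot N1 N0) x).
Hypothesis Hpsi : is_morph psi.
Arguments N0 : clear implicits.
Arguments psi : clear implicits.
Variable x : Obj R.
Implicit Types a b : car D x.

Lemma eqmod_morph_subquot a b : el a -> el b -> meq a b -> eqmod N0 (psi x a) (psi x b).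
Proof.
move=> ha hb hab; have [hpa hpb] := (morph_el Hpsi ha, morph_el Hpsi hb).
exact: (eqmod_of_sub HM HN0 (submod_el HN1 hpa) (submod_el HN1 hpb) (morph_meq Hpsi ha hb hab)).
Qed.

Lemma submod_morph_subquot_idem a :
  el a -> el (madd a a) -> meq (madd a a) a -> N0 x (psi x a).
Proof.
move=> ha haa e; have elpa := submod_el HN1 (morph_el Hpsi ha).
apply: (submod_of_eqmod_double HM HN0 elpa).
apply: (eqmod_trans HM HN0 (b := psi x (madd a a))); last exact: eqmod_morph_subquot.
apply: (eqmod_sym HM HN0).
exact: (eqmod_of_sub HM HN0 (submod_el HN1 (morph_el Hpsi haa)) (el_madd HM elpa elpa)
          (morph_madd Hpsi ha ha)).
Qed.

End MorphismIntoSubquotient.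

Section LowerPbarIntoDeltaLayer.
Variables (K : comPzRingType) (R : ringoid K).
Variables (I : Type) (lt : I -> I -> Prop) (B : I -> Obj R -> Prop) (rep : Obj R -> Prop).
Variables (M : rmod R) (HM : is_rmod M).
Variables (N1 N0 : submod M) (HN1 : is_submod N1) (HN0 : is_submod N0).
Variables (j : I) (f : forall x, car (Pbar lt B rep j) x -> car M x).
Hypotheses (Hf : is_morph f) (Him : im_sub f N1).
Arguments f : clear implicits.
Arguments N1 : clear implicits.
Arguments N0 : clear implicits.

Lemma morph_layer_component (i : I) (n : nat) (es : 'I_n -> Obj R)
    (phi : forall x, car (subquot N1 N0) x ->
                     car (dsum (fun t => Delta lt B rep (es t) i)) x)
    (t : 'I_n) :
  is_morph phi -> is_morph (fun x c => phi x (f x c) t).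
Proof.
move=> Hphi; split=> //; split; last split.
- move=> x a b ha hb hab.
  apply: (morph_meq Hphi (Him ha) (Him hb)).
  exact: (submod_sub_of_meq HM HN0 (morph_el Hf ha) (morph_el Hf hb) (morph_meq Hf ha hb hab)).
- move=> x a b ha hb.
  have hab := Pbar_el_madd ha hb.
  apply: (trace_sub_trans (b := phi x (madd (f x a) (f x b)) t)).
    apply: (morph_meq Hphi (Him hab) (submodD HN1 (Him ha) (Him hb))).
    apply: (submod_sub_of_meq HM HN0 (morph_el Hf hab) _ (morph_madd Hf ha hb)).
    exact: (el_madd HM (morph_el Hf ha) (morph_el Hf hb)).
  exact: (morph_madd Hphi (Him ha) (Him hb)).
- move=> x y m g hm.
  apply: (trace_sub_trans (b := phi x (act (f y m) g) t)).
    apply: (morph_meq Hphi (Him (Pbar_el_act g hm)) (submod_act HN1 g (Him hm))).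
    apply: (submod_sub_of_meq HM HN0 (morph_el Hf (Pbar_el_act g hm)) _ (morph_act Hf g hm)).
    exact: (el_act HM g (morph_el Hf hm)).
  exact: (morph_act Hphi g (Him hm)).
Qed.

Lemma im_sub_lower_layer (i : I) (Hji : lt j i) :
  in_Delta_sum lt B rep i (subquot N1 N0) -> im_sub f N0.
Proof.
case=> n [es [_ [phi [psi [Hphi [Hpsi [Hpsiphi _]]]]]]] x c hc.
set Z := mzero (dsum (fun t => Delta lt B rep (es t) i)) x.
have elZ : el Z by split=> //; exists nil => t _ /=; rewrite subr0; exact: trace0.
have elphic := morph_el Hphi (Him hc).
have phic_Z : meq (phi x (f x c)) Z.
  move=> t /=; rewrite subr0.
  exact: (morph_Pbar_Delta_trace Hji (morph_layer_component t Hphi) hc).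
have psiZ : N0 x (psi x Z).
  apply: (submod_morph_subquot_idem HM HN1 HN0 Hpsi elZ).
    by split=> //; exists nil => t _ /=; rewrite !addr0 subr0; exact: trace0.
  by move=> t /=; rewrite !addr0 subr0; exact: trace0.
apply: (submod_of_eqmod0 HM HN0).
apply: (eqmod_trans HM HN0 (b := psi x (phi x (f x c)))).
  apply: (eqmod_sym HM HN0).
  exact: (eqmod_of_sub HM HN0 (submod_el HN1 (morph_el Hpsi elphic)) (morph_el Hf hc)
            (Hpsiphi x _ (Him hc))).
apply: (eqmod_trans HM HN0 (b := psi x Z)).
  exact: (eqmod_morph_subquot HM HN1 HN0 Hpsi elphic elZ phic_Z).
exact: (eqmod0_of_submod HM HN0 psiZ).
Qed.

End LowerPbarIntoDeltaLayer.

Lemma downward_ind (P : nat -> Prop) (k a : nat) :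
  (k <= a)%N -> P a -> (forall l, (k < l <= a)%N -> P l -> P l.-1) -> P k.
Proof.
move=> le_ka; have [d ->] : exists d, a = (k + d)%N by exists (a - k)%N; lia.
elim: d {le_ka} => [|d IH] Pd step; first by rewrite addn0 in Pd.
rewrite addnS in Pd step.
apply: IH => [|l /andP[lt_kl le_l]]; last by apply: step => //; lia.
by apply: (step (k + d).+1) => //; lia.
Qed.

Theorem proposition4p6
  (K : comPzRingType) (R : ringoid K)
  (HR : locally_finite R)
  (I : Type) (lt : I -> I -> Prop) (Hwo : well_order lt)
  (B : I -> Obj R -> Prop) (HB : exhaustive_admissible lt B)
  (rep : Obj R -> Prop) (Hrep : rep_system rep)
  (M : rmod R) (HM : is_rmod M)
  (HM0 : ~ (forall x (m : car M x), el m -> meq m (mzero M x)))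
  (a : nat) (Mf : nat -> submod M) (idx : nat -> I)
  (Hsub : forall k, (k <= a)%N -> is_submod (Mf k))
  (H0 : forall x (m : car M x), Mf 0%N x m <-> zerosub m)
  (Ha : forall x (m : car M x), Mf a x m <-> el m)
  (Hstrict : forall k, (1 <= k <= a)%N ->
      (forall x (m : car M x), Mf k.-1 x m -> Mf k x m) /\
      ~ (forall x (m : car M x), Mf k x m -> Mf k.-1 x m))
  (Hquot : forall k, (1 <= k <= a)%N ->
      in_Delta_sum lt B rep (idx k) (subquot (Mf k) (Mf k.-1)))
  (Hinc : forall k l, (1 <= k)%N -> (k < l)%N -> (l <= a)%N -> lt (idx k) (idx l)) :
  forall k, (1 <= k <= a)%N ->
  forall j : I, (lt j (idx k) \/ j = idx k) ->
  forall f : forall x, car (Pbar lt B rep j) x -> car M x,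
    is_morph f ->
    (j = idx k -> im_sub f (Mf k)) /\
    (lt j (idx k) -> im_sub f (Mf k.-1)).
Proof.
move=> k /andP[k_ge1 le_ka] j le_j f Hf.
have [_ [lt_trans _]] := Hwo.
have descend l : (1 <= l <= a)%N -> lt j (idx l) -> im_sub f (Mf l) -> im_sub f (Mf l.-1).
  move=> /andP[l_ge1 le_la] lt_jl im_l.
  have le_l1a : (l.-1 <= a)%N by lia.
  apply: (im_sub_lower_layer HM (Hsub l le_la) (Hsub l.-1 le_l1a) Hf im_l lt_jl).
  by apply: Hquot; apply/andP.
have im_k : im_sub f (Mf k).
  apply: (downward_ind (P := fun l => im_sub f (Mf l)) le_ka) => [x m hm | l /andP[lt_kl le_la]].
    by apply/Ha; exact: (morph_el Hf hm).
  apply: descend; first by apply/andP; split; lia.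
  have lt_kl_idx := Hinc k l k_ge1 lt_kl le_la.
  by case: le_j => [lt_jk | ->] //; exact: lt_trans lt_jk lt_kl_idx.
split=> // lt_jk; apply: descend => //; exact/andP.
Qed.
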